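(* Let $\sigma_{CF2}$ be CF2 semantics. For every two argumentation frameworks $AF=(AR,Attacks)$ and $AF'=(AR',Attacks')$ with $AF\preceq_N AF'$: $$\forall E\in\sigma_{CF2}(AF)\ \exists E'\in\sigma_{CF2}(AF') \text{ such that } (E'\not\subseteq AR\ \lor\ E'=E).$$
   Context: An argumentation framework is a pair $AF=(AR,Attacks)$ with $AR$ a finite set and $Attacks\subseteq AR\times AR$; $a$ attacks $b$ iff $(a,b)\in Attacks$; a set $S$ attacks $b$ iff some element of $S$ attacks $b$. $AF\preceq_N AF'$ (normal expansion) iff $AR\subseteq AR'$, $Attacks\subseteq Attacks'$ and no $(a,b)\in Attacks'\setminus Attacks$ has $a,b\in AR$. $S$ is conflict-free iff no element of $S$ attacks an element of $S$; a naive extension is a $\subseteq$-maximal conflict-free set. Attack sequence: $\langle a_1,\dots,a_n\rangle$ of pairwise distinct arguments with $(a_i,a_{i+1})\in Attacks$; $b$ is reachable from $a$ iff such a sequence has $a_1=a,a_n=b$. SCCs: maximal sets of mutually reachable arguments; $SCCS_{AF}$ is the set of them. $AF\downarrow_S=(S,Attacks\cap(S\times S))$. For an SCC $S$ and $E\subseteq AR$: $S^-_{out}=\{a\notin S: a\text{ attacks some element of }S\}$; $D_{AF}(S,E)=\{a\in S: E\cap S^-_{out}\text{ attacks }a\}$; $P_{AF}(S,E)=\{a\in S: E\cap S^-_{out}\text{ does not attack }a\text{ and }\exists b\in S^-_{out}\text{ attacking }a\text{ such that }E\text{ does not attack }b\}$; $UP_{AF}(S,E)=S\setminus D_{AF}(S,E)$.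 CF2: $E\subseteq AR$ is a CF2 extension of $AF$ iff either $|SCCS_{AF}|=1$ and $E$ is a naive extension of $AF$, or $|SCCS_{AF}|>1$ and for every $S\in SCCS_{AF}$, $E\cap S$ is a CF2 extension of $AF\downarrow_{UP_{AF}(S,E)}$. $\sigma_{CF2}(AF)$ is the set of all CF2 extensions. *)

From mathcomp Require Import all_boot.
Set Implicit Arguments. Unset Strict Implicit. Unset Printing Implicit Defensive.

(* Only the
   attacks between members of AR count (see [attacks]); thus every value
   denotes a genuine AF (AR, Attacks) with Attacks ⊆ AR × AR. *)
Record AF (T : finType) := mkAF { AR : {set T}; Att : rel T }.

Section AFDefs.
Variable T : finType.
Implicit Types (F : AF T) (E S : {set T}).

Definition attacks F : rel T :=
  fun a b => [&& a \in AR F, b \in AR F & Att F a b].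

Definition set_attacks F E (b : T) : bool := [exists a in E, attacks F a b].

Definition normal_expansion F F' : Prop :=
  [/\ AR F \subset AR F',
      (forall a b, attacks F a b -> attacks F' a b) &
      (forall a b, a \in AR F -> b \in AR F -> attacks F' a b -> attacks F a b)].

Definition conflict_free F E : bool :=
  [forall a in E, forall b in E, ~~ attacks F a b].

Definition naive F E : bool :=
  [&& E \subset AR F, conflict_free F E &
      [forall E' : {set T},
         ~~ [&& E' \subset AR F, conflict_free F E' & E \proper E']]].

(* reachability along attack sequences (reflexive: the one-element sequence) *)
Definition reach F : rel T := connect (attacks F).

Definition scc F (a : T) : {set T} :=
  [set b in AR F | reach F a b && reach F b a].
Definition SCCS F : {set {set T}} := [set scc F a | a in AR F].

Definition restrict F S : AF T := mkAF (S :&: AR F) (Att F).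

Definition S_out F S : {set T} :=
  [set a in AR F | (a \notin S) && [exists b in S, attacks F a b]].
Definition D_AF F S E : {set T} :=
  [set a in S | set_attacks F (E :&: S_out F S) a].
Definition P_AF F S E : {set T} :=
  [set a in S | ~~ set_attacks F (E :&: S_out F S) a &&
                [exists b in S_out F S, attacks F b a && ~~ set_attacks F E b]].
Definition UP_AF F S E : {set T} := S :\: D_AF F S E.

(* CF2 with fuel n; the fuel #|AR| suffices since in the recursive case each
   UP_AF(S,E) ⊆ S is a proper subset of AR (there are >1 SCCs). *)
Fixpoint cf2_fuel (n : nat) F E : bool :=
  (E \subset AR F) &&
  if #|SCCS F| <= 1 then naive F E
  else match n with
       | 0 => false
       | n'.+1 => [forall S in SCCS F,
                    cf2_fuel n' (restrict F (UP_AF F S E)) (E :&: S)]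
       end.

Definition cf2_ext F E : bool := cf2_fuel #|AR F| F E.

End AFDefs.

From mathcomp Require Import all_boot.

Set Implicit Arguments. Unset Strict Implicit. Unset Printing Implicit Defensive.

(* Two facts drive the proof.  First, CF2 is directional not only for single
   SCCs but for every union X of SCCs: if E is a CF2 extension of F, then
   E :&: X is one of F restricted to UP(X, E), the part of X not attacked by
   E from outside X.  Second, CF2 extensions can be built SCC by SCC along a
   topological order of the SCC graph, choosing on each SCC S any CF2
   extension of the restriction to UP(S, E) determined by what was chosen on
   the attackers of S.
   Every SCC S of F' is a union of SCCs of F, and the normal expansion
   restricts to one between F and F' cut down to UP(S, E).  Building an
   extension of F' along its SCCs, by induction on |AR F'| we may take on S a
   set that either is E :&: S or leaves AR F; once the set built so far leaves
   AR F, any choice will do.  When F' is a single SCC, a naive extension E of F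
   is conflict-free in F', and a naive extension of F' strictly containing E
   must leave AR F because E is maximal in F. *)

Section CF2.
Variable T : finType.
Implicit Types (F G : AF T) (A B E S U V X Y C : {set T}) (a b t x y z : T).

Lemma attacks_AR F a b : attacks F a b -> (a \in AR F) && (b \in AR F).
Proof. by case/and3P=> -> ->. Qed.

Lemma attacks_restrict F X a b :
  attacks (restrict F X) a b = [&& a \in X, b \in X & attacks F a b].
Proof.
rewrite /attacks /= !inE.
by case: (a \in X); case: (b \in X); case: (a \in AR F); case: (b \in AR F).
Qed.

Lemma restrict_id F X : AR F \subset X -> restrict F X = F.
Proof. by case: F => AR0 Att0 /= /setIidPr; rewrite /restrict /= => ->. Qed.

Lemma restrict_restrict F X Y : restrict (restrict F X) Y = restrict F (Y :&: X).
Proof. by rewrite /restrict /= setIA. Qed.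

Lemma set_attacksP F A b :
  reflect (exists2 a, a \in A & attacks F a b) (set_attacks F A b).
Proof.
by apply: (iffP existsP) => [[a /andP[]] | [a ha hab]]; [exists a | exists a; apply/andP].
Qed.

Lemma set_attacks0 F b : set_attacks F set0 b = false.
Proof. by apply/set_attacksP => -[a]; rewrite inE. Qed.

Lemma set_attacksU F A B b :
  set_attacks F (A :|: B) b = set_attacks F A b || set_attacks F B b.
Proof.
apply/set_attacksP/orP => [[a] | [] /set_attacksP[a ha hab]].
- by case/setUP => ha hab; [left | right]; apply/set_attacksP; exists a.
- by exists a; rewrite ?inE ?ha.
- by exists a; rewrite ?inE ?ha ?orbT.
Qed.

Lemma set_attacks_restrict F X A b :
  A \subset X -> b \in X -> set_attacks (restrict F X) A b = set_attacks F A b.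
Proof.
move=> /subsetP hAX hb; apply/set_attacksP/set_attacksP => -[a ha hab]; exists a => //.
- by move: hab; rewrite attacks_restrict => /and3P[].
- by rewrite attacks_restrict hAX ?hb.
Qed.

Lemma in_UP_AF F S E z :
  (z \in UP_AF F S E) = (z \in S) && ~~ set_attacks F (E :\: S) z.
Proof.
rewrite !inE; case hzS: (z \in S) => //=; rewrite andbT.
congr (~~ _); apply/set_attacksP/set_attacksP => -[a ha haz]; exists a => //.
- by move: ha; rewrite !inE => /andP[-> /and3P[_ -> _]].
- move: ha; rewrite !inE => /andP[-> ->]; case/andP: (attacks_AR haz) => -> _ /=.
  by apply/existsP; exists z; rewrite hzS.
Qed.

Lemma UP_AF_sub F S E : UP_AF F S E \subset S.
Proof. exact: subsetDl. Qed.

Lemma UP_AF_id F X E : E \subset X -> UP_AF F X E = X.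
Proof.
move=> hEX; have /eqP hE0 : E :\: X == set0 by rewrite setD_eq0.
by apply/setP => z; rewrite in_UP_AF hE0 set_attacks0 andbT.
Qed.

Lemma in_scc F x y : (y \in scc F x) = [&& y \in AR F, reach F x y & reach F y x].
Proof. by rewrite inE. Qed.

Lemma mem_scc F x : x \in AR F -> x \in scc F x.
Proof. by move=> hx; rewrite in_scc hx /reach connect0. Qed.

Lemma scc_sub F x : scc F x \subset AR F.
Proof. by apply/subsetP => y; rewrite in_scc => /andP[]. Qed.

Lemma scc_eq F x y : y \in scc F x -> scc F y = scc F x.
Proof.
rewrite in_scc => /and3P[_ hxy hyx]; apply/setP => z; rewrite !in_scc.
case: (z \in AR F) => //=; apply/andP/andP => -[h1 h2]; split.
- exact: connect_trans hxy h1.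
- exact: connect_trans h2 hyx.
- exact: connect_trans hyx h1.
- exact: connect_trans h2 hxy.
Qed.

Lemma SCCSP F S : reflect (exists2 x, x \in AR F & S = scc F x) (S \in SCCS F).
Proof. exact: imsetP. Qed.

Lemma scc_SCCS F x : x \in AR F -> scc F x \in SCCS F.
Proof. exact: imset_f. Qed.

Lemma SCCS_sub F S : S \in SCCS F -> S \subset AR F.
Proof. by case/SCCSP=> x _ ->; apply: scc_sub. Qed.

Lemma SCCS_eq F S1 S2 z :
  S1 \in SCCS F -> S2 \in SCCS F -> z \in S1 -> z \in S2 -> S1 = S2.
Proof. by move=> /SCCSP[x _ ->] /SCCSP[y _ ->] /scc_eq <- /scc_eq <-. Qed.

Lemma SCCS_neq0 F S : S \in SCCS F -> S != set0.
Proof. by case/SCCSP=> x hx ->; apply/set0Pn; exists x; apply: mem_scc. Qed.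

Lemma card_SCCS F : #|SCCS F| <= #|AR F|.
Proof. exact: leq_imset_card. Qed.

Lemma SCCS_single F S : #|SCCS F| <= 1 -> S \in SCCS F -> S = AR F.
Proof.
move=> h1 hS; apply/eqP; rewrite eqEsubset SCCS_sub //=.
apply/subsetP => y hy; have hy' := scc_SCCS hy.
by move/card_le1_eqP: h1 => /(_ _ _ hS hy') <-; apply: mem_scc.
Qed.

Lemma card_SCC_lt F S : 1 < #|SCCS F| -> S \in SCCS F -> #|S| < #|AR F|.
Proof.
move=> h1 hS; rewrite ltn_neqAle subset_leq_card ?SCCS_sub // andbT.
apply/negP => /eqP hc; move: h1; rewrite ltnNge => /negP; apply.
have hSA : S = AR F by apply/eqP; rewrite eqEcard SCCS_sub // hc leqnn.
rewrite -(cards1 S) subset_leq_card //; apply/subsetP => S' hS'; rewrite inE.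
case/SCCSP: (hS') => x hx hS'x.
have hxS' : x \in S' by rewrite hS'x mem_scc.
by apply/eqP/(SCCS_eq hS' hS hxS'); rewrite hSA.
Qed.

Lemma card_restrict_UP_lt F S E :
  1 < #|SCCS F| -> S \in SCCS F -> #|AR (restrict F (UP_AF F S E))| < #|AR F|.
Proof.
move=> h1 hS; apply: leq_ltn_trans (card_SCC_lt h1 hS).
by apply/subset_leq_card/(subset_trans (subsetIl _ _))/UP_AF_sub.
Qed.

Lemma AF_ind (P : AF T -> Prop) :
  (forall F, (forall G, #|AR G| < #|AR F| -> P G) -> P F) -> forall F, P F.
Proof.
move=> IH F; move: {2}#|AR F| (leqnn #|AR F|) => n.
elim: n F => [|n IHn] F hn; apply: IH => G hG.
  by move: (leq_trans hG hn).
by apply: IHn; rewrite -ltnS (leq_trans hG hn).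
Qed.

Definition subAF F G := AR F \subset AR G /\ subrel (attacks F) (attacks G).

Lemma subAF_restrict F X : subAF (restrict F X) F.
Proof.
by split=> [|a b]; [apply: subsetIr | rewrite attacks_restrict => /and3P[]].
Qed.

Lemma subAF_restrictS F X Y : X \subset Y -> subAF (restrict F X) (restrict F Y).
Proof.
move=> /subsetP hXY; split=> [|a b]; first exact: setSI (introT subsetP hXY).
by rewrite !attacks_restrict => /and3P[/hXY -> /hXY -> ->].
Qed.

Lemma subAF_expansion F F' : normal_expansion F F' -> subAF F F'.
Proof. by case. Qed.

Lemma reach_subAF F G : subAF F G -> subrel (reach F) (reach G).
Proof. by case=> _ hFG; apply: connect_sub => a b /hFG; apply: connect1. Qed.

Lemma scc_subAF F G x : subAF F G -> scc F x \subset scc G x.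
Proof.
move=> hFG; apply/subsetP => y; rewrite !in_scc => /and3P[hy hxy hyx].
by rewrite (subsetP hFG.1) ?(reach_subAF hFG hxy) ?(reach_subAF hFG hyx).
Qed.

Definition scc_closed F X := forall x, x \in X -> x \in AR F -> scc F x \subset X.

Lemma scc_closed_subAF F G S : subAF F G -> S \in SCCS G -> scc_closed F S.
Proof.
move=> hFG /SCCSP[s _ ->] x hx hxF.
by rewrite -(scc_eq hx); apply: scc_subAF.
Qed.

Lemma cf2_fuel_stable n m F E :
  #|AR F| <= n -> #|AR F| <= m -> cf2_fuel n F E = cf2_fuel m F E.
Proof.
have single G : #|AR G| <= 0 -> #|SCCS G| <= 1.
  by move=> h; apply: leq_trans (card_SCCS G) (leq_trans h _).
elim: n m F E => [|n IH] [|m] F E hn hm //=; try by rewrite single.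
case: ifP => // /negbT; rewrite -ltnNge => hS; congr (_ && _).
apply: eq_forallb => S; case hSi: (S \in SCCS F) => //=.
by apply: IH; rewrite -ltnS (leq_trans (card_restrict_UP_lt _ hS hSi)).
Qed.

Lemma cf2_ext_unfold F E : cf2_ext F E = (E \subset AR F) &&
  (if #|SCCS F| <= 1 then naive F E
   else [forall S in SCCS F, cf2_ext (restrict F (UP_AF F S E)) (E :&: S)]).
Proof.
rewrite {1}/cf2_ext; case hk: #|AR F| => [|k] /=.
  by rewrite (leq_trans (card_SCCS F)) ?hk.
case: ifP => // /negbT; rewrite -ltnNge => hS; congr (_ && _).
apply: eq_forallb => S; case hSi: (S \in SCCS F) => //=.
by apply: cf2_fuel_stable; rewrite // -ltnS -hk card_restrict_UP_lt.
Qed.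

Lemma cfP F E :
  reflect (forall a b, a \in E -> b \in E -> ~~ attacks F a b) (conflict_free F E).
Proof.
apply: (iffP forall_inP) => h a.
  by move=> b ha hb; move/forall_inP: (h a ha); apply.
by move=> ha; apply/forall_inP => b; apply: h.
Qed.

Lemma naiveP F E : reflect [/\ E \subset AR F, conflict_free F E &
   forall E', E' \subset AR F -> conflict_free F E' -> ~~ (E \proper E')] (naive F E).
Proof.
apply: (iffP and3P) => -[h1 h2 h3]; split => //.
  by move=> E' h4 h5; move/forallP: h3 => /(_ E'); rewrite h4 h5.
by apply/forallP => E'; apply/and3P => -[h4 h5]; apply/negP/h3.
Qed.

Lemma naive_sub F E : naive F E -> E \subset AR F.
Proof. by case/naiveP. Qed.

Lemma naive_set0 F : AR F = set0 -> naive F set0.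
Proof.
move=> h0; apply/naiveP; split=> [||E']; rewrite ?sub0set //.
  by apply/cfP => a b; rewrite inE.
by rewrite h0 subset0 => /eqP ->; rewrite properxx.
Qed.

Lemma naive_extend F E :
  E \subset AR F -> conflict_free F E -> exists2 E', naive F E' & E \subset E'.
Proof.
move=> hEA hcf; set cf := fun E => (E \subset AR F) && conflict_free F E.
have cfE : cf E by rewrite /cf hEA hcf.
have [E' /maxsetP[/andP[h1 h2] hmax] hEE'] := maxset_exists cfE.
exists E' => //; apply/naiveP; split=> // E'' h3 h4; apply/negP.
have cfE'' : cf E'' by rewrite /cf h3 h4.
by move=> hp; move: (hp); rewrite {1}(hmax E'' cfE'' (proper_sub hp)) properxx.
Qed.

Lemma cf2_ext_single F E : #|SCCS F| <= 1 -> cf2_ext F E = naive F E.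
Proof. by move=> hS; rewrite cf2_ext_unfold hS andb_idl // => /naive_sub. Qed.

Lemma cf2_extE F E : cf2_ext F E = (E \subset AR F) &&
  [forall S in SCCS F, cf2_ext (restrict F (UP_AF F S E)) (E :&: S)].
Proof.
rewrite cf2_ext_unfold; case: ifP => hS //; case hEA: (E \subset AR F) => //=.
have hSCC S : S \in SCCS F -> cf2_ext (restrict F (UP_AF F S E)) (E :&: S) = naive F E.
  move=> hSi; rewrite (SCCS_single hS hSi) UP_AF_id // restrict_id //.
  by rewrite (setIidPl hEA) cf2_ext_single.
case: (set_0Vmem (AR F)) => [h0 | [x hx]].
  have -> : E = set0 by apply/eqP; rewrite -subset0 -h0.
  by rewrite naive_set0 //; apply/esym/forall_inP => S /SCCSP[x]; rewrite h0 inE.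
apply/idP/forall_inP => [hn S hSi | h]; first by rewrite hSCC.
by rewrite -(hSCC _ (scc_SCCS hx)) h ?scc_SCCS.
Qed.

Lemma cf2_ext_sub F E : cf2_ext F E -> E \subset AR F.
Proof. by rewrite cf2_extE => /andP[]. Qed.

Lemma conflict_free_sccwise F E :
  (forall S, S \in SCCS F -> naive (restrict F (UP_AF F S E)) (E :&: S)) ->
  conflict_free F E.
Proof.
move=> hnv; apply/cfP => a b ha hb; apply/negP => hab.
have /andP[_ hbA] := attacks_AR hab.
have hS := scc_SCCS hbA; set S := scc F b in hS.
have /naiveP[hsub /cfP hcf _] := hnv S hS.
have /subsetP hUP : E :&: S \subset UP_AF F S E := subset_trans hsub (subsetIl _ _).
have hbS : b \in E :&: S by rewrite inE hb mem_scc.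
case haS: (a \in S).
  have haS' : a \in E :&: S by rewrite inE ha haS.
  by move: (hcf a b haS' hbS); rewrite attacks_restrict (hUP a haS') (hUP b hbS) hab.
move: (hUP b hbS); rewrite in_UP_AF => /andP[_ /set_attacksP]; apply.
by exists a; rewrite // inE haS ha.
Qed.

Lemma naive_sccwise F E : E \subset AR F ->
  (forall S, S \in SCCS F -> naive (restrict F (UP_AF F S E)) (E :&: S)) ->
  naive F E.
Proof.
move=> hEA hnv; have hcf := conflict_free_sccwise hnv.
apply/naiveP; split => // E' hE'A /cfP hcf'; apply/negP => /properP[hEE' [x hxE' hxE]].
have hxA := subsetP hE'A x hxE'.
have hS := scc_SCCS hxA; set S := scc F x in hS.
have /naiveP[hsub _ hmax] := hnv S hS.
set E1 := x |: (E :&: S).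
have /subsetP hE1E' : E1 \subset E'.
  by rewrite subUset sub1set hxE' (subset_trans (subsetIl _ _) hEE').
have hxUP : x \in UP_AF F S E.
  rewrite in_UP_AF mem_scc //=; apply/set_attacksP => -[a].
  rewrite inE => /andP[_ ha] hax.
  by move: (hcf' a x (subsetP hEE' a ha) hxE'); rewrite hax.
have hE1A : E1 \subset AR (restrict F (UP_AF F S E)).
  by rewrite subUset sub1set hsub /= inE hxUP hxA.
have hcf1 : conflict_free (restrict F (UP_AF F S E)) E1.
  apply/cfP => a b ha hb; rewrite attacks_restrict.
  by rewrite (negbTE (hcf' a b (hE1E' a ha) (hE1E' b hb))) !andbF.
move: (hmax E1 hE1A hcf1); rewrite properE subsetUr /= negbK.
by move=> /subsetP /(_ x (setU11 _ _)); rewrite inE (negbTE hxE).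
Qed.

Lemma cf2_ext_naive F E : cf2_ext F E -> naive F E.
Proof.
elim/AF_ind: F E => F IH E.
case: (leqP #|SCCS F| 1) => [hS | hS]; first by rewrite cf2_ext_single.
rewrite cf2_ext_unfold leqNgt hS /= => /andP[hEA /forall_inP hall].
by apply: naive_sccwise => // S hSi; apply/IH/hall; rewrite ?card_restrict_UP_lt.
Qed.

Lemma cf2_ext_cf F E : cf2_ext F E -> conflict_free F E.
Proof. by case/cf2_ext_naive/naiveP. Qed.

(** * Building CF2 extensions SCC by SCC *)

Definition up_closed F U := forall a b, attacks F a b -> b \in U -> a \in U.

Lemma up_closed_AR F : up_closed F (AR F).
Proof. by move=> a b /and3P[]. Qed.

Lemma up_closed_reach F U a b : up_closed F U -> reach F a b -> b \in U -> a \in U.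
Proof.
move=> hU /connectP[p hp ->]; elim: p a hp => [|c p IH] a //= /andP[hac hp] hl.
exact: hU hac (IH c hp hl).
Qed.

Lemma S_out_sub F S U : up_closed F U -> S \subset U -> S_out F S \subset U.
Proof.
move=> hU hSU; apply/subsetP => a.
rewrite inE => /and3P[_ _ /existsP[b /andP[hb hab]]].
exact: hU hab (subsetP hSU b hb).
Qed.

Lemma S_out_disjoint F S : [disjoint S & S_out F S].
Proof.
by rewrite disjoint_sym disjoints_subset; apply/subsetP => a; rewrite !inE => /and3P[].
Qed.

Lemma UP_AF_setU F S E C :
  [disjoint C & S_out F S] -> UP_AF F S (E :|: C) = UP_AF F S E.
Proof. by move=> hC; rewrite /UP_AF /D_AF setIUl (disjoint_setI0 hC) setU0. Qed.

Lemma sink_SCC F U : up_closed F U -> U \subset AR F -> U != set0 ->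
  exists2 S, S \in SCCS F & S \subset U /\ up_closed F (U :\: S).
Proof.
move=> hU hUA /set0Pn[x0 hx0].
(* The SCC of an x reaching as few arguments as possible is a sink of U. *)
pose desc x := [set y | reach F x y].
have [x hx hmin] := arg_minnP (fun x => #|desc x|) hx0.
exists (scc F x); first exact/scc_SCCS/(subsetP hUA).
split.
  apply/subsetP => y; rewrite in_scc => /and3P[_ _ hyx].
  exact: up_closed_reach hyx hx.
move=> a b hab; rewrite !inE => /andP[hbS hbU]; have haU := hU a b hab hbU.
rewrite haU andbT; apply: contra hbS => /and3P[_ hxa _].
have hxb : reach F x b := connect_trans hxa (connect1 hab).
have hsub : desc b \subset desc x.
  by apply/subsetP => z; rewrite !inE; apply: connect_trans hxb.
have hdesc : desc b = desc x by apply/eqP; rewrite eqEcard hsub hmin.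
have : x \in desc b by rewrite hdesc inE /reach connect0.
by rewrite inE => hbx; case/andP: (attacks_AR hab) => _ ->; rewrite hxb.
Qed.

Definition cf2_partial F U E := E \subset U /\
  forall S, S \in SCCS F -> S \subset U ->
  cf2_ext (restrict F (UP_AF F S E)) (E :&: S).

Lemma cf2_partial0 F : cf2_partial F set0 set0.
Proof.
split=> [|S hS]; first exact: sub0set.
by rewrite subset0 => /eqP hS0; move: (SCCS_neq0 hS); rewrite hS0 eqxx.
Qed.

Lemma cf2_partial_extend F V S E C :
  up_closed F V -> S \in SCCS F -> [disjoint S & V] -> cf2_partial F V E ->
  cf2_ext (restrict F (UP_AF F S E)) C -> cf2_partial F (V :|: S) (E :|: C).
Proof.
move=> hV hS hSV [hEV hok] hC.
have hCS : C \subset S.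
  apply: subset_trans (cf2_ext_sub hC) _.
  exact: subset_trans (subsetIl _ _) (UP_AF_sub _ _ _).
have hCV : [disjoint C & V] := disjointWl hCS hSV.
split=> [|S' hS' hS'VS]; first exact: setUSS.
have [-> | hne] := eqVneq S' S.
  have -> : (E :|: C) :&: S = C.
    rewrite setIUl (setIidPl hCS) (disjoint_setI0 _) ?set0U //.
    by rewrite disjoint_sym (disjointWr hEV).
  by rewrite UP_AF_setU // (disjointWl hCS (S_out_disjoint _ _)).
have hS'V : S' \subset V.
  apply/subsetP => z hz; move/subsetP/(_ z hz): hS'VS; case/setUP => // hzS.
  by case/eqP: hne; apply: SCCS_eq hS' hS hz hzS.
have -> : (E :|: C) :&: S' = E :&: S'.
  by rewrite setIUl (disjoint_setI0 (disjointWr hS'V hCV)) setU0.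
by rewrite UP_AF_setU ?hok // (disjointWr (S_out_sub hV hS'V) hCV).
Qed.

Lemma cf2_ext_build F (P : {set T} -> {set T} -> Prop) :
  P set0 set0 ->
  (forall V S E, S \in SCCS F -> S_out F S \subset V -> P V E ->
     exists2 C, cf2_ext (restrict F (UP_AF F S E)) C & P (V :|: S) (E :|: C)) ->
  exists2 E, cf2_ext F E & P (AR F) E.
Proof.
move=> P0 step.
suff /(_ (AR F) (@up_closed_AR F) (subxx _)) [E [[hEA hok] hP]] : forall U,
    up_closed F U -> U \subset AR F -> exists E, cf2_partial F U E /\ P U E.
  exists E => //; rewrite cf2_extE hEA.
  by apply/forall_inP => S hS; apply: hok (SCCS_sub hS).
move=> U; move: {2}#|U| (leqnn #|U|) => n.
elim: n U => [|n IH] U hn hU hUA; have [-> | hU0] := eqVneq U set0;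
  try by exists set0; split; [apply: cf2_partial0 |].
  by move: hU0; rewrite -card_gt0 ltnNge hn.
have [S hS [hSU hV]] := sink_SCC hU hUA hU0.
set V := U :\: S in hV.
have hSV : [disjoint S & V] by rewrite /V disjoint_sym disjoints_subset setDE subsetIr.
have hVn : #|V| <= n.
  have /set0Pn[s hs] := SCCS_neq0 hS.
  rewrite -ltnS (leq_trans _ hn) // proper_card //; apply/properP.
  by split; [apply: subsetDl | exists s; rewrite ?inE ?hs ?(subsetP hSU)].
have [E [hE hP]] := IH V hVn hV (subset_trans (subsetDl _ _) hUA).
have hSout : S_out F S \subset V.
  rewrite /V setDE subsetI S_out_sub //= -disjoints_subset disjoint_sym.
  exact: S_out_disjoint.
have [C hC hPC] := step V S E hS hSout hP.
have hVS : V :|: S = U.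
  apply/setP => z; rewrite !inE; case: (boolP (z \in S)) => hz /=; rewrite ?orbF //.
  by rewrite (subsetP hSU z hz).
by exists (E :|: C); rewrite -hVS; split=> //; apply: cf2_partial_extend.
Qed.

Lemma naive_exists F : exists E, naive F E.
Proof.
have hcf0 : conflict_free F set0 by apply/cfP => a b; rewrite inE.
by have [E hE _] := naive_extend (sub0set (AR F)) hcf0; exists E.
Qed.

Lemma cf2_exists F : exists E, cf2_ext F E.
Proof.
elim/AF_ind: F => F IH.
case: (leqP #|SCCS F| 1) => [hS | hS].
  by have [E hE] := naive_exists F; exists E; rewrite cf2_ext_single.
have step V S E : S \in SCCS F -> S_out F S \subset V -> True ->
    exists2 C, cf2_ext (restrict F (UP_AF F S E)) C & True.
  by move=> hSi _ _; have [C hC] := IH _ (card_restrict_UP_lt E hS hSi); exists C.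
by have [E hE _] := cf2_ext_build I step; exists E.
Qed.

(** * Directionality of CF2 *)

Lemma UP_AF_conflict_free F E X : conflict_free F E -> E :&: X \subset UP_AF F X E.
Proof.
move=> /cfP hcf; apply/subsetP => z /setIP[hzE hzX].
rewrite in_UP_AF hzX /=; apply/set_attacksP => -[a /setDP[haE _] haz].
by move: (hcf a z haE hzE); rewrite haz.
Qed.

Lemma UP_AFS F E S X : S \subset X -> UP_AF F S E \subset UP_AF F X E.
Proof.
move=> /subsetP hSX; apply/subsetP => z; rewrite !in_UP_AF => /andP[/hSX -> /=].
apply: contra => /set_attacksP[a /setDP[haE haX] haz].
apply/set_attacksP; exists a => //.
by rewrite inE haE andbT; apply: contra haX; apply: hSX.
Qed.

Lemma UP_AF_restrict_UP F E X C : conflict_free F E -> C \subset X ->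
  UP_AF (restrict F (UP_AF F X E)) C (E :&: X) :&: UP_AF F X E = UP_AF F C E.
Proof.
move=> hcf /subsetP hCX; apply/setP => z; rewrite inE !in_UP_AF.
case hzC: (z \in C) => //=; rewrite (hCX z hzC) /=.
have -> : E :\: C = (E :&: X) :\: C :|: E :\: X.
  apply/setP => a; rewrite !inE.
  by case: (boolP (a \in C)) => [/hCX -> | _]; case: (a \in E); case: (a \in X).
rewrite set_attacksU negb_or.
case hzX: (set_attacks F (E :\: X) z) => /=; rewrite ?andbF //.
rewrite set_attacks_restrict ?andbT //.
  exact: subset_trans (subsetDl _ _) (UP_AF_conflict_free X hcf).
by rewrite in_UP_AF hCX // hzX.
Qed.

Lemma cf2_ext_set0 F : AR F = set0 -> cf2_ext F set0.
Proof.
move=> h0; rewrite cf2_ext_single ?naive_set0 //.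
by rewrite (leq_trans (card_SCCS F)) // h0 cards0.
Qed.

Lemma cf2_ext_restrict_UP_single F E X : #|SCCS F| <= 1 -> cf2_ext F E ->
  scc_closed F X -> cf2_ext (restrict F (UP_AF F X E)) (E :&: X).
Proof.
move=> hS hE hX; have hEA := cf2_ext_sub hE.
case: (set_0Vmem (X :&: AR F)) => [hX0 | [x /setIP[hxX hxA]]].
  have -> : E :&: X = set0.
    apply/eqP; rewrite -subset0 -hX0 subsetI subsetIr.
    exact: subset_trans (subsetIl _ _) hEA.
  by apply: cf2_ext_set0; apply/eqP; rewrite -subset0 -hX0 setSI // UP_AF_sub.
have hAX : AR F \subset X by rewrite -(SCCS_single hS (scc_SCCS hxA)) hX.
have hEX := subset_trans hEA hAX.
by rewrite UP_AF_id // restrict_id // (setIidPl hEX).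
Qed.

Lemma cf2_ext_restrict_UP F E X : cf2_ext F E -> scc_closed F X ->
  cf2_ext (restrict F (UP_AF F X E)) (E :&: X).
Proof.
elim/AF_ind: F E X => F IH E X hE hX.
case: (leqP #|SCCS F| 1) => [hS | hS]; first exact: cf2_ext_restrict_UP_single.
have hcf := cf2_ext_cf hE.
move: (hE); rewrite cf2_extE => /andP[hEA /forall_inP hall].
set G := restrict F (UP_AF F X E).
rewrite cf2_extE; apply/andP; split.
  by rewrite /= subsetI UP_AF_conflict_free // (subset_trans (subsetIl _ _) hEA).
apply/forall_inP => _ /SCCSP[t htG ->]; set C := scc G t.
have /setIP[htUP htA] := htG.
have htX : t \in X := subsetP (UP_AF_sub _ _ _) t htUP.
have hS' := scc_SCCS htA; set S := scc F t in hS'.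
have hSX : S \subset X := hX t htX htA.
have hCS : C \subset S := scc_subAF t (subAF_restrict F _).
have hCH : scc_closed (restrict F (UP_AF F S E)) C.
  exact: scc_closed_subAF (subAF_restrictS F (UP_AFS F E hSX)) (scc_SCCS htG).
have := IH _ (card_restrict_UP_lt E hS hS') _ _ (hall S hS') hCH.
rewrite /G !restrict_restrict !UP_AF_restrict_UP ?(subset_trans hCS hSX) //.
by rewrite -!setIA (setIidPr hCS) (setIidPr (subset_trans hCS hSX)).
Qed.

Lemma conflict_free_expansion F F' E : normal_expansion F F' -> E \subset AR F ->
  conflict_free F' E = conflict_free F E.
Proof.
case=> _ hfw hbw /subsetP hEA; apply/cfP/cfP => hcf a b ha hb; apply/negP => hab.
  by move/negP: (hcf a b ha hb); apply; apply: hfw.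
by move/negP: (hcf a b ha hb); apply; apply: hbw; rewrite ?hEA.
Qed.

Lemma UP_AF_expansion F F' S E : normal_expansion F F' -> E \subset AR F ->
  UP_AF F' S E :&: AR F = UP_AF F S E :&: AR F.
Proof.
case=> _ hfw hbw /subsetP hEA; apply/setP => z; rewrite !in_setI !in_UP_AF.
case hzA: (z \in AR F); rewrite ?andbF // !andbT; congr (_ && ~~ _).
apply/set_attacksP/set_attacksP => -[a ha haz]; exists a => //; last exact: hfw.
by apply: hbw => //; apply: hEA; case/setDP: ha.
Qed.

Lemma normal_expansion_restrict F F' X X' : normal_expansion F F' ->
  X' :&: AR F = X :&: AR F -> normal_expansion (restrict F X) (restrict F' X').
Proof.
case=> hsub hfw hbw hXX'.
have inX' y : y \in X -> y \in AR F -> y \in X'.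
  by move=> hy hyA; have /setIP[] : y \in X' :&: AR F by rewrite hXX' inE hy hyA.
split=> [|a b|a b /setIP[haX haA] /setIP[hbX hbA]].
- by rewrite /= -hXX' setISS.
- rewrite !attacks_restrict => /and3P[haX hbX hab].
  by case/andP: (attacks_AR hab) => haA hbA; rewrite !inX' // hfw.
- by rewrite !attacks_restrict haX hbX => /and3P[_ _ /hbw]; apply.
Qed.

Lemma cf2_ext_expansion_single F F' E : #|SCCS F'| <= 1 ->
  normal_expansion F F' -> cf2_ext F E ->
  exists2 E', cf2_ext F' E' & ~ E' \subset AR F \/ E' = E.
Proof.
move=> hS hN hE; have /naiveP[hEA hcf hmax] := cf2_ext_naive hE.
have hEA' : E \subset AR F' := subset_trans hEA (subAF_expansion hN).1.
have hcf' : conflict_free F' E by rewrite (conflict_free_expansion hN).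
have [E' hE' hEE'] := naive_extend hEA' hcf'.
exists E'; first by rewrite cf2_ext_single.
have [-> | hne] := eqVneq E' E; [by right | left => hE'A].
have hcfE' : conflict_free F E'.
  by rewrite -(conflict_free_expansion hN hE'A); case/naiveP: hE'.
by move/negP: (hmax E' hE'A hcfE'); apply; rewrite properEneq eq_sym hne hEE'.
Qed.

Lemma cf2_ext_expansion F F' E : normal_expansion F F' -> cf2_ext F E ->
  exists2 E', cf2_ext F' E' & ~ E' \subset AR F \/ E' = E.
Proof.
elim/AF_ind: F' F E => F' IH F E hN hE.
case: (leqP #|SCCS F'| 1) => [hS | hS]; first exact: cf2_ext_expansion_single.
have hEA := cf2_ext_sub hE.
pose P V E0 := ~ E0 \subset AR F \/ E0 = E :&: V.
have step V S E0 : S \in SCCS F' -> S_out F' S \subset V -> P V E0 ->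
    exists2 C, cf2_ext (restrict F' (UP_AF F' S E0)) C & P (V :|: S) (E0 :|: C).
  move=> hS' hSV [hout | ->].
    have [C hC] := cf2_exists (restrict F' (UP_AF F' S E0)).
    exists C => //; left; apply: contra_not hout.
    exact: subset_trans (subsetUl _ _).
  have -> : UP_AF F' S (E :&: V) = UP_AF F' S E.
    rewrite -{2}(setID E V) UP_AF_setU // (disjointWr hSV) //.
    by rewrite disjoints_subset setDE subsetIr.
  have hYY' := UP_AF_expansion S hN hEA.
  have hXS : scc_closed F S := scc_closed_subAF (subAF_expansion hN) hS'.
  have [C hC hCE] := IH _ (card_restrict_UP_lt E hS hS') _ _
    (normal_expansion_restrict hN hYY') (cf2_ext_restrict_UP hE hXS).
  exists C => //; case: hCE => [hCY | ->]; last by right; rewrite setIUr.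
  left => hECA; apply: hCY; rewrite /= -hYY' subsetI.
  rewrite (subset_trans (cf2_ext_sub hC) (subsetIl _ _)).
  exact: subset_trans (subsetUr _ _) hECA.
have [E' hE' hP] := @cf2_ext_build F' P (or_intror (esym (setI0 E))) step.
exists E' => //; case: hP => [|->]; [by left | right].
exact/setIidPl/(subset_trans hEA)/(subAF_expansion hN).1.
Qed.

End CF2.

Theorem proposition40 (T : finType) (F F' : AF T) :
  normal_expansion F F' ->
  forall E : {set T}, cf2_ext F E ->
  exists E' : {set T}, cf2_ext F' E' /\ (~ (E' \subset AR F) \/ E' = E).
Proof. by move=> hN E /(cf2_ext_expansion hN)[E' hE' hor]; exists E'. Qed.
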